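(* Let $n\ge3$ and $0\le k\le n-2$ be integers. Then the polynomial $a_{n,k}$ has total degree exactly $2+k$.
   Context: Let $T_1,T_2,\dots$ be indeterminates. Define linear operators $L,H$ on monomials (constants sent to $0$): $L(T_{\alpha_1}\cdots T_{\alpha_r})=\sum_{1\le i<j\le r}T_{\alpha_1}\cdots T_{\alpha_i+1}\cdots T_{\alpha_j+1}\cdots T_{\alpha_r}$, $H(T_{\alpha_1}\cdots T_{\alpha_r})=-\frac12\sum_{k=1}^{r}\sum_{l=1}^{\alpha_k-1}\binom{\alpha_k}{l}T_{1+l}T_{1+\alpha_k-l}\prod_{i\ne k}T_{\alpha_i}$. For $n\ge2$ let $A_n=-\sum_{k=1}^{n-1}\binom{n}{k}T_{1+k}T_{1+n-k}T_n$; set $R_2=0$, $R_{n+1}=A_n+L(R_n)+H(R_n)$. For $0\le k\le n-2$, $a_{n,k}$ denotes the polynomial obtained by taking all monomials of $R_{n+1}$ (with their coefficients) whose largest variable index is $n-k$ and dividing them by $T_{n-k}$, so that $R_{n+1}=\sum_{k=0}^{n-2}a_{n,k}T_{n-k}$. *)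

From HB Require Import structures.
From mathcomp Require Import all_boot all_order all_algebra.
From mathcomp Require Import finmap.
From mathcomp Require Import monalg.
Set Implicit Arguments.
Unset Strict Implicit.
Unset Printing Implicit Defensive.
Import GRing.Theory.
Local Open Scope ring_scope.

(* The polynomial ring Q[T_0, T_1, T_2, ...]; only T_1, T_2, ... are used. *)
Definition poly := {malg rat[cmonom nat]}.

Definition monom_of (s : seq nat) : cmonom nat :=
  foldr (fun i m => mulcm (ucm i) m) (onecm nat) s.

Definition idx_of (m : cmonom nat) : seq nat :=
  flatten [seq nseq (m i) i | i <- finsupp m].

Definition T_ (s : seq nat) : poly := << monom_of s >>.

Definition T (i : nat) : poly := T_ [:: i].

Definition incr_at (s : seq nat) (i : nat) : seq nat :=
  set_nth 0%N s i (nth 0%N s i).+1.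

Definition L_mon (s : seq nat) : poly :=
  \sum_(i < size s) \sum_(j < size s | (i < j)%N) T_ (incr_at (incr_at s i) j).

Definition H_mon (s : seq nat) : poly :=
  (- (1 / 2%:R)) *:
    \sum_(k < size s)
      \sum_(1 <= l < nth 0%N s k)
        ('C(nth 0%N s k, l))%:R *:
          T_ ((1 + l)%N :: (1 + (nth 0%N s k - l))%N :: (take k s ++ drop k.+1 s)).

Definition Lop (p : poly) : poly :=
  \sum_(m <- msupp p) p@_m *: L_mon (idx_of m).
Definition Hop (p : poly) : poly :=
  \sum_(m <- msupp p) p@_m *: H_mon (idx_of m).

Definition A (n : nat) : poly :=
  - \sum_(1 <= k < n) ('C(n, k))%:R *: (T (1 + k) * T (1 + (n - k)) * T n).

(* R_2 = 0, R_{n+1} = A_n + L(R_n) + H(R_n) for n >= 2 (R_0, R_1 unused, set to 0) *)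
Fixpoint R (n : nat) : poly :=
  match n with
  | 0 => 0
  | m.+1 => if (m < 2)%N then 0 else A m + Lop (R m) + Hop (R m)
  end.

(* largest variable index occurring in a monomial (0 for the constant monomial) *)
Definition maxidx (m : cmonom nat) : nat := \max_(i <- finsupp m) i.

Definition a (n k : nat) : poly :=
  \sum_(m <- msupp (R n.+1) | maxidx m == (n - k)%N)
     << (R n.+1)@_m *g divcm m (ucm (n - k)%N) >>.

(* total degree of a polynomial: max degree of a monomial in its support
   (msize p = 1 + total degree for p != 0, msize 0 = 0) *)
Definition totdeg (p : poly) : nat := (msize p).-1.

From Pilot Require Import Defs.
From mathcomp Require Import all_boot all_order all_algebra finmap monalg.
From mathcomp Require Import zify ring.
Import GRing.Theory Num.Theory Order.TTheory.
Set Implicit Arguments.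
Unset Strict Implicit.
Unset Printing Implicit Defensive.

(** Every monomial of R_(n+1) carries a coefficient of sign (-1)^(degree),
  because A_n has degree 3 and negative coefficients, L has nonnegative
  coefficients and preserves degree, and H has negative coefficients and raises
  the degree by one; hence no cancellation ever occurs in the recursion.  The
  same bookkeeping shows that (largest index) + degree <= n + 3 for every
  monomial of R_(n+1): L raises the index by at most one, H raises the degree
  but not the index, and A_n has index <= n.  So a monomial with largest index
  n - k has degree <= k + 3, i.e. a_(n,k) has degree <= k + 2.  Conversely,
  with u = n - k, A_u contains T_2 T_u^2, and the l = 1 term of H splits T_u
  into T_2 T_u, so T_2^(k+1) T_u^2 occurs in R_(n+1) and T_2^(k+1) T_u in
  a_(n,k). *)

Lemma monom_ofE s i : monom_of s i = count_mem i s.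
Proof.
elim: s => [|x s IH] /=; first by rewrite onecmE.
by rewrite mulcmE ucmE IH.
Qed.

Lemma perm_monom_of s1 s2 : perm_eq s1 s2 -> monom_of s1 = monom_of s2.
Proof. by move=> /permP eq12; apply/eqP/cmP => i; rewrite !monom_ofE eq12. Qed.

Lemma monom_of_cat s1 s2 : monom_of (s1 ++ s2) = mulcm (monom_of s1) (monom_of s2).
Proof. by apply/eqP/cmP => i; rewrite mulcmE !monom_ofE count_cat. Qed.

Lemma count_idx_of m i : count_mem i (idx_of m) = m i.
Proof.
rewrite /idx_of count_flatten -map_comp sumnE big_map /=.
under eq_bigr do rewrite count_nseq /=.
have [im|im] := boolP (i \in finsupp m).
  rewrite (bigD1_seq i) //= ?fset_uniq // eqxx mul1n big1 ?addn0 // => j /negbTE.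
  by rewrite eq_sym => ->.
rewrite big1_seq; last by move=> j /andP[_ jm]; case: eqP => // ji; rewrite -ji jm in im.
by apply/esym/eqP; rewrite cmE_eq0.
Qed.

Lemma idx_ofK : cancel idx_of monom_of.
Proof. by move=> m; apply/eqP/cmP => i; rewrite monom_ofE count_idx_of. Qed.

Lemma mdeg_monom_of s : mdeg (monom_of s) = size s.
Proof.
elim: s => [|x s IH] /=; first exact: mdeg1.
by rewrite (mdegM (ucm x) (monom_of s)) mdegU IH.
Qed.

Lemma size_idx_of m : size (idx_of m) = mdeg m.
Proof. by rewrite -{2}(idx_ofK m) mdeg_monom_of. Qed.

Lemma maxidx_monom_of s : maxidx (monom_of s) = \max_(x <- s) x.
Proof.
apply: eq_big_idem; first exact: maxnn.
by move=> i; rewrite -cmE_neq0 monom_ofE -lt0n -has_count has_pred1.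
Qed.

Lemma maxidx_idx_of m : maxidx m = \max_(x <- idx_of m) x.
Proof. by rewrite -maxidx_monom_of idx_ofK. Qed.

Lemma leq_nth_bigmax s p : nth 0 s p <= \max_(x <- s) x.
Proof.
have [ps|] := ltnP p (size s); last by move=> /(nth_default 0) ->.
exact: (leq_bigmax_seq _ (mem_nth 0 ps)).
Qed.

Lemma nth_incr_at s i p : nth 0 (incr_at s i) p = nth 0 s p + (p == i).
Proof. by rewrite nth_set_nth /=; case: eqP => [->|]; rewrite ?addn1 ?addn0. Qed.

Lemma size_incr_at s i : i < size s -> size (incr_at s i) = size s.
Proof. by move=> lt_is; rewrite size_set_nth; apply/maxn_idPr. Qed.

Lemma incr_at2_shape s (i j : nat) : i < j < size s ->
  let t := incr_at (incr_at s i) j in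
  size t = size s /\ \max_(x <- t) x <= \max_(x <- s) x + 1.
Proof.
move=> /andP[lt_ij lt_js] t; have lt_is := ltn_trans lt_ij lt_js.
split; first by rewrite !size_incr_at // size_incr_at.
apply/bigmax_leqP_seq => _ /(nthP 0)[p _ <-] _.
rewrite !nth_incr_at -addnA leq_add ?leq_nth_bigmax //.
by case: (eqVneq p i) => [->|]; rewrite ?(ltn_eqF lt_ij) //=; case: (p == j).
Qed.

Lemma split_shape s (k l : nat) : k < size s -> 0 < l < nth 0 s k ->
  let t := l.+1 :: (nth 0 s k - l).+1 :: (take k s ++ drop k.+1 s) in
  size t = (size s).+1 /\ \max_(x <- t) x <= \max_(x <- s) x.
Proof.
move=> lt_ks /andP[l_gt0 lt_l] t; split.
  by rewrite /t /= size_cat size_take size_drop lt_ks; congr _.+1; lia.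
have sk_le := leq_nth_bigmax s k.
apply/bigmax_leqP_seq => x + _; rewrite !inE => /or3P[/eqP->|/eqP->|]; try lia.
by rewrite mem_cat => /orP[/mem_take|/mem_drop] xs; apply: leq_bigmax_seq xs _.
Qed.

Local Open Scope ring_scope.
Local Notation poly := Defs.poly.

Section SignedPolynomials.
Variables (R : numDomainType) (K : choiceType) (sg : K -> R).
Implicit Types (P Q : K -> Prop) (p q : {malg R[K]}).

Definition signed_in P p :=
  forall m, 0 <= sg m * p@_m /\ (p@_m != 0 -> P m).

Lemma signed_in_sub P Q p :
  (forall m, P m -> Q m) -> signed_in P p -> signed_in Q p.
Proof. by move=> PQ hp m; have [? Pm] := hp m; split=> // /Pm/PQ. Qed.

Lemma signed_inD P p q : signed_in P p -> signed_in P q -> signed_in P (p + q).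
Proof.
move=> hp hq m; have [p_ge0 pP] := hp m; have [q_ge0 qP] := hq m.
rewrite mcoeffD mulrDr addr_ge0 //; split=> // pq_neq0.
have [p0|/pP//] := eqVneq p@_m 0; apply: qP.
by rewrite p0 add0r in pq_neq0.
Qed.

Lemma signed_in_sum (I : Type) (r : seq I) (C : pred I) (F : I -> {malg R[K]}) P :
  (forall i, C i -> signed_in P (F i)) -> signed_in P (\sum_(i <- r | C i) F i).
Proof.
move=> hF; apply: big_ind => //; last exact: signed_inD.
by move=> m; rewrite mcoeff0 mulr0 eqxx.
Qed.

Lemma signed_inZ P c p : 0 <= c -> signed_in P p -> signed_in P (c *: p).
Proof.
move=> c_ge0 hp m; have [p_ge0 pP] := hp m; rewrite mcoeffZ mulrCA mulr_ge0 //.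
by split=> //; rewrite mulf_eq0 negb_or => /andP[_ /pP].
Qed.

Lemma signed_in_sum_neq0 (I : eqType) (r : seq I) (F : I -> {malg R[K]}) P i0 m :
  (forall i, signed_in P (F i)) -> sg m != 0 -> i0 \in r -> (F i0)@_m != 0 ->
  (\sum_(i <- r) F i)@_m != 0.
Proof.
move=> hF sg_neq0 i0r Fi0_neq0.
rewrite raddf_sum -(mulrI_eq0 _ (lregP sg_neq0)) mulr_sumr psumr_neq0; last first.
  by move=> i _; have [] := hF i m.
apply/hasP; exists i0 => //=; have [Fi0_ge0 _] := hF i0 m.
by rewrite lt_def Fi0_ge0 mulf_neq0.
Qed.

Lemma signed_inD_neq0 P Q p q m : signed_in P p -> signed_in Q q -> sg m != 0 ->
  (p@_m != 0) || (q@_m != 0) -> (p + q)@_m != 0.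
Proof.
move=> hp hq sg_neq0 pq_neq0; have [p_ge0 _] := hp m; have [q_ge0 _] := hq m.
rewrite mcoeffD -(mulrI_eq0 _ (lregP sg_neq0)) mulrDr paddr_eq0 // negb_and.
by rewrite !mulf_eq0 !negb_or sg_neq0.
Qed.

End SignedPolynomials.

Local Notation nonneg_in := (signed_in (fun _ : cmonom nat => 1 : rat)).

Lemma nonneg_in_T (P : cmonom nat -> Prop) s : P (monom_of s) -> nonneg_in P (T_ s).
Proof.
move=> Ps m; rewrite /T_ mcoeffU1 mul1r ler0n.
by have [<-|] := eqVneq (monom_of s) m; rewrite ?eqxx.
Qed.

Lemma signed_in_const sg (c : rat) P p :
  nonneg_in P p -> (forall m, P m -> sg m = c) -> signed_in sg P (c *: p).
Proof.
move=> hp sgP m; have [p_ge0 pP] := hp m; rewrite mcoeffZ; split; last first.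
  by rewrite mulf_eq0 negb_or => /andP[_ /pP].
have [->|/pP/sgP->] := eqVneq p@_m 0; first by rewrite !mulr0.
by rewrite mulrA -expr2 mulr_ge0 ?sqr_ge0 // -[p@_m]mul1r.
Qed.

Definition sgn (m : cmonom nat) : rat := (-1) ^+ mdeg m.

Lemma sgn_neq0 m : sgn m != 0.
Proof. by rewrite signr_eq0. Qed.

Lemma sgnM_eq m m' : mdeg m' = mdeg m -> sgn m' * sgn m = 1.
Proof. by rewrite /sgn => ->; rewrite -expr2 sqrr_sign. Qed.

Lemma sgnM_succ m m' : mdeg m' = (mdeg m).+1 -> sgn m' * sgn m = -1.
Proof. by rewrite /sgn => ->; rewrite exprS -mulrA -expr2 sqrr_sign mulr1. Qed.

(* [Lop] and [Hop] are [linext L_mon] and [linext H_mon]. *)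
Definition linext (F : seq nat -> poly) (p : poly) : poly :=
  \sum_(m <- msupp p) p@_m *: F (idx_of m).

Section LinearExtension.
Variables (F : seq nat -> poly) (P : cmonom nat -> Prop).
Variables (Q : cmonom nat -> cmonom nat -> Prop) (p : poly).
Hypothesis p_signed : signed_in sgn P p.
Hypothesis F_signed : forall m, signed_in (fun m' => sgn m' * sgn m) (Q m) (F (idx_of m)).

Lemma signed_in_linext_term m :
  signed_in sgn (fun m' => exists2 m0, P m0 & Q m0 m') (p@_m *: F (idx_of m)).
Proof.
move=> m'; have [p_ge0 pP] := p_signed m; have [F_ge0 FQ] := F_signed m m'.
rewrite mcoeffZ; split; last first.
  by rewrite mulf_eq0 negb_or => /andP[/pP Pm /FQ Qm]; exists m.
rewrite -[_ * _]mul1r -(sgnM_eq (erefl (mdeg m))).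
have -> : sgn m * sgn m * (sgn m' * (p@_m * (F (idx_of m))@_m'))
        = (sgn m * p@_m) * (sgn m' * sgn m * (F (idx_of m))@_m').
  by ring.
exact: mulr_ge0.
Qed.

Lemma signed_in_linext : signed_in sgn (fun m' => exists2 m, P m & Q m m') (linext F p).
Proof. by apply: signed_in_sum => m _; apply: signed_in_linext_term. Qed.

Lemma linext_neq0 M t :
  p@_M != 0 -> (F (idx_of M))@_t != 0 -> (linext F p)@_t != 0.
Proof.
move=> pM_neq0 FM_neq0; apply: (signed_in_sum_neq0 (i0 := M) signed_in_linext_term).
- exact: sgn_neq0.
- by rewrite -mcoeff_neq0.
- by rewrite mcoeffZ mulf_neq0.
Qed.

End LinearExtension.

Lemma L_mon_nonneg s :
  nonneg_in (fun m => mdeg m = size s /\ (maxidx m <= \max_(x <- s) x + 1)%N) (L_mon s).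
Proof.
apply: signed_in_sum => i _; apply: signed_in_sum => j lt_ij; apply: nonneg_in_T.
have [] := @incr_at2_shape s i j; first by rewrite lt_ij ltn_ord.
by rewrite mdeg_monom_of maxidx_monom_of.
Qed.

Lemma L_mon_signed m : signed_in (fun m' => sgn m' * sgn m)
  (fun m' => mdeg m' = mdeg m /\ (maxidx m' <= maxidx m + 1)%N) (L_mon (idx_of m)).
Proof.
rewrite -[L_mon _]scale1r; apply: signed_in_const => [|m' [/sgnM_eq //]].
by apply: signed_in_sub (L_mon_nonneg _) => m'; rewrite size_idx_of -maxidx_idx_of.
Qed.

Definition H_split (s : seq nat) : poly :=
  \sum_(k < size s) \sum_(1 <= l < nth 0%N s k)
    ('C(nth 0%N s k, l))%:R *: T_ ((1 + l)%N :: (1 + (nth 0%N s k - l))%N :: (take k s ++ drop k.+1 s)).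

Lemma H_monE s : H_mon s = -1 *: (2%:R^-1 *: H_split s).
Proof. by rewrite scalerA mulN1r -div1r. Qed.

Lemma H_split_nonneg s :
  nonneg_in (fun m => mdeg m = (size s).+1 /\ (maxidx m <= \max_(x <- s) x)%N) (H_split s).
Proof.
apply: signed_in_sum => k _; rewrite big_nat; apply: signed_in_sum => l l_range.
apply: signed_inZ; first exact: ler0n.
apply: nonneg_in_T; rewrite !add1n; have [] := split_shape (ltn_ord k) l_range.
by rewrite mdeg_monom_of maxidx_monom_of.
Qed.

Lemma H_mon_signed m : signed_in (fun m' => sgn m' * sgn m)
  (fun m' => mdeg m' = (mdeg m).+1 /\ (maxidx m' <= maxidx m)%N) (H_mon (idx_of m)).
Proof.
rewrite H_monE; apply: signed_in_const => [|m' [/sgnM_succ //]].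
apply: signed_inZ; first by rewrite invr_ge0 ler0n.
by apply: signed_in_sub (H_split_nonneg _) => m'; rewrite size_idx_of -maxidx_idx_of.
Qed.

Lemma T_mul s1 s2 : T_ s1 * T_ s2 = T_ (s1 ++ s2).
Proof. by rewrite /T_ malgM_def fgmulUU mulr1 monom_of_cat. Qed.

Definition A_split (n : nat) : poly :=
  \sum_(1 <= k < n) ('C(n, k))%:R *: T_ [:: (1 + k)%N; (1 + (n - k))%N; n].

Lemma AE n : A n = -1 *: A_split n.
Proof.
rewrite scaleN1r /A /A_split; apply/eqP; rewrite eqr_opp; apply/eqP.
by apply: eq_bigr => k _; rewrite /T !T_mul.
Qed.

Lemma A_signed n : signed_in sgn (fun m => (maxidx m + mdeg m <= n + 3)%N) (A n).
Proof.
apply: (@signed_in_sub _ _ _ (fun m => mdeg m = 3%N /\ (maxidx m <= n)%N)); first lia.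
rewrite AE; apply: signed_in_const => [|m [deg3 _]]; last by rewrite /sgn deg3.
rewrite /A_split big_nat; apply: signed_in_sum => k /andP[k_ge1 lt_kn].
apply: signed_inZ; first exact: ler0n.
apply: nonneg_in_T; rewrite mdeg_monom_of maxidx_monom_of.
by rewrite !big_cons big_nil /=; lia.
Qed.

Lemma R_rec n : (2 <= n)%N -> R n.+1 = A n + linext L_mon (R n) + linext H_mon (R n).
Proof. by move=> n_ge2; rewrite [in LHS]/= ltnNge n_ge2. Qed.

Lemma R_signed_weight n : signed_in sgn (fun m => (maxidx m + mdeg m <= n + 3)%N) (R n.+1).
Proof.
elim: n => [|n IH]; first by move=> m; rewrite mcoeff0 mulr0 eqxx.
have [n_lt1|n_ge1] := ltnP n 1.
  by rewrite /= ltnS n_lt1 => m; rewrite mcoeff0 mulr0 eqxx.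
rewrite R_rec //; apply: signed_inD; first apply: signed_inD.
- exact: A_signed.
- apply: signed_in_sub (signed_in_linext IH L_mon_signed) => m' [m le_m]; lia.
- apply: signed_in_sub (signed_in_linext IH H_mon_signed) => m' [m le_m]; lia.
Qed.

Lemma R_signedT n : signed_in sgn (fun=> True) (R n).
Proof.
case: n => [|n]; last exact: signed_in_sub (R_signed_weight n).
by move=> m; rewrite mcoeff0 mulr0 eqxx.
Qed.

Definition witness (u j : nat) : cmonom nat := monom_of (nseq j.+1 2%N ++ [:: u; u]).

Lemma witnessS u j : witness u j.+1 = mulcm (ucm 2) (witness u j).
Proof. by []. Qed.

Lemma mdeg_witness u j : mdeg (witness u j) = (j + 3)%N.
Proof. by rewrite mdeg_monom_of size_cat size_nseq addSnnS. Qed.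

Lemma maxidx_witness u j : (2 <= u)%N -> maxidx (witness u j) = u.
Proof.
move=> u_ge2; rewrite maxidx_monom_of; apply/eqP; rewrite eqn_leq; apply/andP; split.
  apply/bigmax_leqP_seq => x + _; rewrite mem_cat => /orP[/nseqP[-> _] //|].
  by rewrite !inE => /orP[]/eqP->.
by apply: leq_bigmax_seq => //; rewrite mem_cat mem_head orbT.
Qed.

Lemma nonneg_scaled_T n s : nonneg_in (fun=> True) (n%:R *: T_ s).
Proof. by apply: signed_inZ; [exact: ler0n | exact: nonneg_in_T]. Qed.

Lemma mcoeff_scaled_T_neq0 n s : (0 < n)%N -> (n%:R *: T_ s)@_(monom_of s) != 0.
Proof. by move=> n_gt0; rewrite mcoeffZ /T_ mcoeffU1 eqxx mulr1 pnatr_eq0 -lt0n. Qed.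

Lemma A_split_witness u : (2 <= u)%N -> (A_split u)@_(witness u 0) != 0.
Proof.
move=> u_ge2; apply: (signed_in_sum_neq0 (i0 := 1%N)) => [k|||].
- exact: nonneg_scaled_T.
- exact: oner_neq0.
- by rewrite mem_index_iota; lia.
have -> : witness u 0 = monom_of [:: (1 + 1)%N; (1 + (u - 1))%N; u].
  by rewrite /witness (_ : (1 + (u - 1))%N = u) //; lia.
by rewrite mcoeff_scaled_T_neq0 ?bin1; lia.
Qed.

Lemma H_split_witness u j :
  (2 <= u)%N -> (H_split (idx_of (witness u j)))@_(witness u j.+1) != 0.
Proof.
move=> u_ge2; set s := idx_of (witness u j).
have us : u \in s.
  by rewrite -has_pred1 has_count count_idx_of monom_ofE count_cat /= eqxx addn_gt0 orbT.
have nth_u : nth 0%N s (index u s) = u by rewrite nth_index.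
have u_pos : (index u s < size s)%N by rewrite index_mem.
apply: (signed_in_sum_neq0 (i0 := Ordinal u_pos)) => [k|||].
- apply: signed_in_sum => l _; exact: nonneg_scaled_T.
- exact: oner_neq0.
- exact: mem_index_enum.
rewrite /= nth_u; apply: (signed_in_sum_neq0 (i0 := 1%N)) => [l|||].
- exact: nonneg_scaled_T.
- exact: oner_neq0.
- by rewrite mem_index_iota; lia.
rewrite -remE (_ : (1 + (u - 1))%N = u); last lia.
have -> : witness u j.+1 = monom_of [:: (1 + 1)%N, u & rem u s].
  by rewrite witnessS -[witness u j]idx_ofK (perm_monom_of (perm_to_rem us)).
by rewrite mcoeff_scaled_T_neq0 ?bin1; lia.
Qed.

Lemma R_rec_neq0 n m : (2 <= n)%N ->
  [|| (A n)@_m != 0, (linext L_mon (R n))@_m != 0 | (linext H_mon (R n))@_m != 0] ->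
  (R n.+1)@_m != 0.
Proof.
move=> n_ge2 summand_neq0; rewrite R_rec //.
have hA : signed_in sgn (fun=> True) (A n) by apply: signed_in_sub (A_signed n).
have hL : signed_in sgn (fun=> True) (linext L_mon (R n)).
  by apply: signed_in_sub (signed_in_linext (R_signedT n) L_mon_signed).
have hH : signed_in sgn (fun=> True) (linext H_mon (R n)).
  by apply: signed_in_sub (signed_in_linext (R_signedT n) H_mon_signed).
apply: (signed_inD_neq0 (signed_inD hA hL) hH (sgn_neq0 m)).
case/or3P: summand_neq0 => [hm|hm|->]; rewrite ?orbT //.
  by rewrite (signed_inD_neq0 hA hL (sgn_neq0 m)) // hm.
by rewrite (signed_inD_neq0 hA hL (sgn_neq0 m)) // hm orbT.
Qed.

Lemma R_witness u j : (2 <= u)%N -> (R (u + j).+1)@_(witness u j) != 0.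
Proof.
move=> u_ge2; elim: j => [|j IH].
  apply: R_rec_neq0; rewrite ?addn0 //.
  by rewrite AE mcoeffZ mulN1r oppr_eq0 A_split_witness.
rewrite addnS; apply: R_rec_neq0; first lia.
apply/or3P/Or33; apply: (linext_neq0 (R_signedT _) H_mon_signed IH).
by rewrite H_monE !mcoeffZ mulN1r oppr_eq0 mulf_neq0 ?H_split_witness.
Qed.

Lemma bigmax_seq_mem (s : seq nat) : (0 < \max_(x <- s) x)%N -> \max_(x <- s) x \in s.
Proof.
elim: s => [|x s IH]; first by rewrite big_nil.
rewrite big_cons inE; case: (leqP x (\max_(y <- s) y)) => _; last by rewrite eqxx.
by move=> /IH ->; rewrite orbT.
Qed.

Lemma maxidx_gt0 (m : cmonom nat) c : (0 < c)%N -> maxidx m = c -> (0 < m c)%N.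
Proof.
move=> c_gt0 max_c; rewrite lt0n cmE_neq0 -max_c.
by apply: bigmax_seq_mem; rewrite [X in (0 < X)%N]max_c.
Qed.

Lemma divcm_ucmK (m : cmonom nat) c : (0 < m c)%N -> mulcm (divcm m (ucm c)) (ucm c) = m.
Proof.
move=> mc_gt0; apply/eqP/cmP => i; rewrite mulcmE divcmE ucmE.
by case: eqP => [<-|_]; rewrite ?subnK ?subn0 ?addn0.
Qed.

Lemma mdeg_divcm_ucm (m : cmonom nat) c : (0 < m c)%N -> mdeg (divcm m (ucm c)) = (mdeg m).-1.
Proof.
move=> mc_gt0; rewrite -[in RHS](divcm_ucmK mc_gt0).
by rewrite (mdegM (divcm m (ucm c)) (ucm c)) mdegU addn1.
Qed.

Lemma msizeU_le (x : rat) (d : cmonom nat) : (msize << x *g d >> <= (mdeg d).+1)%N.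
Proof.
rewrite msizeE; apply/bigmax_leqP_seq => m' m'_supp _.
by have := fsubsetP msuppU_le m' m'_supp; rewrite inE => /eqP->.
Qed.

Lemma mcoeff_a n k M : (0 < n - k)%N -> maxidx M = (n - k)%N ->
  (a n k)@_(divcm M (ucm (n - k)%N)) = (R n.+1)@_M.
Proof.
set c := (n - k)%N; set p := R n.+1 => c_gt0 maxM.
have term m : maxidx m == c ->
    << p@_m *g divcm m (ucm c) >>@_(divcm M (ucm c)) = p@_m *+ (m == M).
  move=> /eqP maxm; rewrite mcoeffU; congr (_ *+ nat_of_bool _).
  apply/idP/idP => [/eqP eq_div|/eqP->//].
  by rewrite -(divcm_ucmK (maxidx_gt0 c_gt0 maxm)) eq_div divcm_ucmK // maxidx_gt0.
rewrite /a -/c -/p raddf_sum (eq_bigr _ term) big_rmcond => [|m]; last first.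
  by case: (eqVneq m M) => [->|_]; rewrite ?maxM ?eqxx ?mulr0n.
have [Mp|Mp] := boolP (M \in msupp p).
  rewrite (bigD1_seq M) ?fset_uniq //= eqxx mulr1n big1 ?addr0 // => m.
  by move=> /negbTE->.
rewrite mcoeff_outdom // big1_seq // => m /andP[_ mp].
by case: eqVneq mp Mp => [->->|].
Qed.

Lemma msize_a_le n k : (0 < n - k)%N -> (msize (a n k) <= k + 3)%N.
Proof.
move=> c_gt0; apply: leq_trans (msize_sum _ _ _) _.
apply/bigmax_leqP_seq => m m_supp /eqP maxm; apply: leq_trans (msizeU_le _ _) _.
rewrite mdeg_divcm_ucm ?(maxidx_gt0 c_gt0) //.
have [_ weight] := R_signed_weight n m; move: weight; rewrite mcoeff_neq0 => /(_ m_supp).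
lia.
Qed.

Theorem mainTheorem12 (n k : nat) :
  (3 <= n)%N -> (k <= n - 2)%N -> (a n k != 0)%R /\ totdeg (a n k) = (2 + k)%N.
Proof.
move=> n_ge3 k_le; set u := (n - k)%N.
have u_ge2 : (2 <= u)%N by rewrite /u; lia.
have n_eq : n = (u + k)%N by rewrite /u; lia.
set t := divcm (witness u k) (ucm u).
have maxw := maxidx_witness k u_ge2.
have a_t : (a n k)@_t != 0.
  rewrite /t mcoeff_a ?maxw //; last by rewrite /u; lia.
  by rewrite n_eq R_witness.
have deg_t : mdeg t = (k + 2)%N.
  by rewrite mdeg_divcm_ucm ?mdeg_witness ?(maxidx_gt0 _ maxw) //; lia.
split; first by apply: contraNneq a_t => ->; rewrite mcoeff0.
rewrite mcoeff_neq0 in a_t; have := msize_mdeg_lt a_t.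
have := @msize_a_le n k; rewrite -/u.
rewrite /totdeg; lia.
Qed.
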